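(* Consider the FlexPD-C iterates described in the context with $\beta>0$, integer $T\ge1$ and $0<\alpha<1/\rho(B)$, and let $C=\sum_{t=0}^{T-1}(I-\alpha B)^t$, $M=C^{-1}(I-\alpha B)^T$, $N=\frac{1}{\alpha}(C^{-1}-M)$. Then for every $k\ge0$, \[\alpha\big(\nabla f(x^k)-\nabla f(x^* )\big)=M(x^k-x^{k+1})+\alpha(\beta A'A-N)(x^{k+1}-x^* )-\alpha A'(\lambda^{k+1}-\lambda^* ).\]
   Context: Setting: $n$ agents are connected by a connected undirected graph with edge set $\mathcal E$, $\epsilon=|\mathcal E|$. For $x\in\mathbb R^n$ let $f(x)=\sum_{i=1}^n f_i(x_i)$, where each $f_i:\mathbb R\to\mathbb R$ is twice differentiable with $m\le f_i''\le L$ for constants $0<m\le L$; $\nabla f(x)=(f_1'(x_1),\dots,f_n'(x_n))'$. $A\in\mathbb R^{\epsilon\times n}$ is the edge–node incidence matrix (null space spanned by the all-ones vector). $B\in\mathbb R^{n\times n}$ is symmetric positive semidefinite with the same null space as $A$, off-diagonal entries nonzero only on edges; $\rho(B)$ is its largest eigenvalue. $x^*$ is the unique minimizer of $f$ subject to $Ax=0$ and $\lambda^*$ a Lagrange multiplier with $\nabla f(x^* )+A'\lambda^*=0$, $Ax^*=0$, $Bx^*=0$, chosen in the column space of $A$. FlexPD-C: given $\alpha,\beta>0$, $T\ge1$, $x^0$ arbitrary, $\lambda^0=0$; for $k\ge0$: $x^{k+1,0}=x^k$; for $t=1,\dots,T$, $x^{k+1,t}=x^{k+1,t-1}-\alpha\nabla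 f(x^k)-\alpha A'\lambda^k-\alpha Bx^{k+1,t-1}$; then $x^{k+1}=x^{k+1,T}$, $\lambda^{k+1}=\lambda^k+\beta Ax^{k+1}$. *)

From HB Require Import structures.
From mathcomp Require Import all_boot all_order all_algebra.
From mathcomp Require Import all_classical all_reals all_analysis.
Set Implicit Arguments. Unset Strict Implicit. Unset Printing Implicit Defensive.
Import Order.TTheory GRing.Theory Num.Theory.
Local Open Scope ring_scope.

Section FlexPD.
Variable R : realType.

(* An undirected graph on nodes 'I_n with eps edges; edge e joins
   (ends e).1 and (ends e).2 (this pair also fixes the orientation used
   in the incidence matrix). *)
Definition graph_adj (n eps : nat) (ends : 'I_eps -> 'I_n * 'I_n) : rel 'I_n :=
  fun i j => [exists e, (ends e == (i, j)) || (ends e == (j, i))].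

Definition simple_graph (n eps : nat) (ends : 'I_eps -> 'I_n * 'I_n) : Prop :=
  (forall e, (ends e).1 != (ends e).2) /\
  (forall e e', (ends e == ends e') || (ends e == ((ends e').2, (ends e').1)) ->
     e = e').

Definition connected_graph (n eps : nat) (ends : 'I_eps -> 'I_n * 'I_n) : Prop :=
  forall i j, connect (graph_adj ends) i j.

Definition incidence (n eps : nat) (ends : 'I_eps -> 'I_n * 'I_n) : 'M[R]_(eps, n) :=
  \matrix_(e, i) (((i == (ends e).1)%:R : R) - (i == (ends e).2)%:R).

Definition gradf (n : nat) (f : 'I_n -> R -> R) (x : 'cV[R]_n) : 'cV[R]_n :=
  \col_i (derive1 (f i) (x i 0)).

Definition inner_step (n eps : nat) (f : 'I_n -> R -> R) (A : 'M[R]_(eps, n))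
  (B : 'M[R]_n) (alpha : R) (xk : 'cV[R]_n) (lk : 'cV[R]_eps) (y : 'cV[R]_n)
  : 'cV[R]_n :=
  y - alpha *: gradf f xk - alpha *: (A^T *m lk) - alpha *: (B *m y).

Definition flexpd_step (n eps : nat) (f : 'I_n -> R -> R) (A : 'M[R]_(eps, n))
  (B : 'M[R]_n) (alpha beta : R) (T : nat) (p : 'cV[R]_n * 'cV[R]_eps)
  : 'cV[R]_n * 'cV[R]_eps :=
  let x' := iter T (inner_step f A B alpha p.1 p.2) p.1 in
  (x', p.2 + beta *: (A *m x')).

Definition flexpd (n eps : nat) (f : 'I_n -> R -> R) (A : 'M[R]_(eps, n))
  (B : 'M[R]_n) (alpha beta : R) (T : nat) (x0 : 'cV[R]_n) (k : nat)
  : 'cV[R]_n * 'cV[R]_eps :=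
  iter k (flexpd_step f A B alpha beta T) (x0, 0).

Definition Cmat (n : nat) (B : 'M[R]_n) (alpha : R) (T : nat) : 'M[R]_n :=
  \sum_(t < T) (1%:M - alpha *: B) ^+ t.

Definition Mmat (n : nat) (B : 'M[R]_n) (alpha : R) (T : nat) : 'M[R]_n :=
  invmx (Cmat B alpha T) *m (1%:M - alpha *: B) ^+ T.

Definition Nmat (n : nat) (B : 'M[R]_n) (alpha : R) (T : nat) : 'M[R]_n :=
  alpha^-1 *: (invmx (Cmat B alpha T) - Mmat B alpha T).

End FlexPD.

From HB Require Import structures.
From mathcomp Require Import all_boot all_order all_algebra.
From mathcomp Require Import all_classical all_reals all_analysis.
From mathcomp Require Import ring lra.
Import Order.TTheory GRing.Theory Num.Theory.
Local Open Scope ring_scope.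

(* With W = I - alpha B, the T inner steps are the affine iteration
   y |-> W y - alpha g with g = grad f(x^k) + A' lambda^k, so
   x^{k+1} = W^T x^k - alpha C g, i.e. C^-1 x^{k+1} = M x^k - alpha g.  The
   identity then follows from lambda^{k+1} = lambda^k + beta A x^{k+1}, the KKT
   condition, A x* = 0 and N x* = 0 (which holds because B x* = 0).
   The one non-algebraic point is the invertibility of C.  If u C = 0 then
   u W^T = u, and for symmetric W this forces u W^2 = u, because the geometric
   sum of the positive semidefinite W^2 is injective.  Then u + u W is fixed by
   W and killed by C, which acts on it as T, so u W = -u: 2/alpha would be an
   eigenvalue of B, contradicting alpha rho < 1. *)

Lemma geom_sum_mulBr (R : pzRingType) (x : R) (k : nat) :
  (\sum_(i < k) x ^+ i) * (x - 1) = x ^+ k - 1.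
Proof.
rewrite subrX1; apply/commr_sym/commr_sum => i _.
exact/commrX/commr_sym/commrB/commr1/commr_refl.
Qed.

Lemma dotmx_self_ge0 (R : realDomainType) n (u : 'rV[R]_n) :
  0 <= (u *m u^T) 0 0.
Proof. by rewrite mxE; apply: sumr_ge0 => j _; rewrite mxE -expr2 sqr_ge0. Qed.

Lemma dotmx_self_eq0 (R : realDomainType) n (u : 'rV[R]_n) :
  ((u *m u^T) 0 0 == 0) = (u == 0).
Proof.
apply/idP/eqP => [|->]; last by rewrite mul0mx mxE.
rewrite mxE psumr_eq0 => [/allP u0|j _]; last by rewrite mxE -expr2 sqr_ge0.
apply/rowP => j; have := u0 j (mem_index_enum j).
by rewrite /= mxE -expr2 sqrf_eq0 mxE => /eqP.
Qed.

Lemma trmx_exp (R : comPzRingType) n (A : 'M[R]_n) k :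
  (A ^+ k)^T = A^T ^+ k.
Proof.
elim: k => [|k IH]; first by rewrite !expr0 trmx1.
by rewrite exprS -mulmxE trmx_mul IH mulmxE -exprSr.
Qed.

Section SymmetricGeometricSum.
Context {R : realFieldType} {n : nat} {W : 'M[R]_n}.
Hypothesis W_sym : W^T = W.

Lemma mulmx_geom_sum_sqr_eq0 {T : nat} {z : 'rV[R]_n} : (0 < T)%N ->
  z *m \sum_(t < T) (W ^+ 2) ^+ t = 0 -> z = 0.
Proof.
case: T => // T _ zS0.
apply/eqP; rewrite -dotmx_self_eq0 eq_le dotmx_self_ge0 andbT.
have dotS : ((z *m \sum_(t < T.+1) (W ^+ 2) ^+ t) *m z^T) 0 0 =
    \sum_(t < T.+1) ((z *m W ^+ t) *m (z *m W ^+ t)^T) 0 0.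
  rewrite mulmx_sumr mulmx_suml summxE; apply: eq_bigr => t _.
  by rewrite trmx_mul trmx_exp W_sym -exprM mulnC exprM expr2 -!mulmxE !mulmxA.
move: dotS; rewrite zS0 mul0mx mxE big_ord_recl expr0 mulmx1 => /esym/eqP.
rewrite addr_eq0 => /eqP ->; rewrite oppr_le0.
by apply: sumr_ge0 => t _; apply: dotmx_self_ge0.
Qed.

Lemma mulmx_exp_fixed_sqr {T : nat} {u : 'rV[R]_n} : (0 < T)%N ->
  u *m W ^+ T = u -> u *m W ^+ 2 = u.
Proof.
move=> T_gt0 uWT; apply/eqP; rewrite -subr_eq0; apply/eqP.
rewrite -[X in _ - X]mulmx1 -mulmxBr.
apply: (mulmx_geom_sum_sqr_eq0 T_gt0).
rewrite -mulmxA mulmxE -subrX1 -exprM mulnC exprM mulmxBr mulmx1.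
by rewrite expr2 -mulmxE mulmxA !uWT subrr.
Qed.

Lemma mulmx_geom_sum_eq0 {T : nat} {u : 'rV[R]_n} : (0 < T)%N ->
  u *m \sum_(t < T) W ^+ t = 0 -> u *m W = - u.
Proof.
move=> T_gt0 uS0.
have uWT : u *m W ^+ T = u.
  apply/eqP; rewrite -subr_eq0 -[X in _ - X]mulmx1 -mulmxBr -geom_sum_mulBr.
  by rewrite -mulmxE mulmxA uS0 mul0mx.
have uW2 := mulmx_exp_fixed_sqr T_gt0 uWT.
set p := u + u *m W.
have pW : p *m W = p by rewrite mulmxDl -mulmxA mulmxE -expr2 uW2 addrC.
have pWt t : p *m W ^+ t = p.
  by elim: t => [|t IH]; rewrite ?expr0 ?mulmx1 // exprSr -mulmxE mulmxA IH pW.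
have pS : p *m \sum_(t < T) W ^+ t = T%:R *: p.
  by rewrite mulmx_sumr (eq_bigr (fun=> p)) // sumr_const card_ord scaler_nat.
have SW : W * \sum_(t < T) W ^+ t = (\sum_(t < T) W ^+ t) * W.
  by apply/commr_sum => t _; apply/commrX/commr_refl.
have : T%:R *: p = 0.
  by rewrite -pS mulmxDl -mulmxA mulmxE SW -mulmxE mulmxA uS0 mul0mx addr0.
move/eqP; rewrite scaler_eq0 pnatr_eq0 eqn0Ngt T_gt0 /= /p addr_eq0.
by move=> /eqP uE; rewrite {2}uE opprK.
Qed.

End SymmetricGeometricSum.

Lemma iter_affine (R : pzRingType) n (W : 'M[R]_n) (b : 'cV[R]_n) t y :
  iter t (fun y => W *m y - b) y = W ^+ t *m y - (\sum_(i < t) W ^+ i) *m b.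
Proof.
elim: t => [|t IH]; first by rewrite big_ord0 mul0mx subr0 expr0 mul1mx.
rewrite iterS IH mulmxBr !mulmxA mulmxE -exprS mulr_sumr big_ord_recl expr0.
under eq_bigr do rewrite -exprS.
by rewrite mulmxDl mul1mx opprD addrAC addrA.
Qed.

Lemma Cmat_unit {R : realType} {n} {B : 'M[R]_n} {rho alpha : R} {T : nat} :
  B^T = B -> (forall a, eigenvalue B a -> a <= rho) -> (0 < T)%N ->
  0 < alpha -> alpha < rho^-1 -> Cmat B alpha T \in unitmx.
Proof.
move=> B_sym rho_max T_gt0 alpha_gt0 alpha_lt.
set W := 1%:M - alpha *: B.
have W_sym : W^T = W by rewrite /W linearB /= trmx1 linearZ /= B_sym.
rewrite -row_free_unit; apply: inj_row_free => u uC0; apply/eqP/contraT => u_neq0.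
have uW := mulmx_geom_sum_eq0 W_sym T_gt0 uC0.
have uB : alpha *: (u *m B) = 2%:R *: u.
  have -> : alpha *: (u *m B) = u - u *m W.
    by rewrite /W mulmxBr mulmx1 -scalemxAr opprB addrC subrK.
  by rewrite uW opprK scaler_nat mulr2n.
have u_eigen : u *m B = (2%:R / alpha) *: u.
  by rewrite mulrC -scalerA -uB scalerA mulVf ?scale1r ?gt_eqF.
have := rho_max _ (introT eigenvalueP (ex_intro2 _ _ u u_eigen u_neq0)).
have rho_gt0 : 0 < rho by rewrite -invr_gt0 (lt_trans alpha_gt0).
rewrite ler_pdivrMr //; move: alpha_lt.
by rewrite -(ltr_pM2l rho_gt0) mulfV ?gt_eqF //; lra.
Qed.

Lemma iter_inner_step (R : realType) n eps (f : 'I_n -> R -> R)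
    (A : 'M[R]_(eps, n)) (B : 'M[R]_n) alpha xk lk y t :
  iter t (inner_step f A B alpha xk lk) y =
  (1%:M - alpha *: B) ^+ t *m y
    - alpha *: (Cmat B alpha t *m (gradf f xk + A^T *m lk)).
Proof.
rewrite scalemxAr (@eq_iter _ _ (fun y => (1%:M - alpha *: B) *m y
   - alpha *: (gradf f xk + A^T *m lk))) ?iter_affine // => z.
rewrite /inner_step mulmxBl mul1mx -scalemxAl scalerDr opprD.
by rewrite [RHS]addrA -addrA [in RHS]addrAC addrA.
Qed.

Lemma Mmat_ker (R : realType) n (B : 'M[R]_n) alpha T (x : 'cV[R]_n) :
  B *m x = 0 -> Mmat B alpha T *m x = invmx (Cmat B alpha T) *m x.
Proof.
move=> Bx0; rewrite /Mmat -mulmxA; congr (_ *m _).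
elim: T => [|T IH]; first by rewrite expr0 mul1mx.
by rewrite exprSr -mulmxE -mulmxA mulmxBl mul1mx -scalemxAl Bx0 scaler0 subr0.
Qed.

Lemma Nmat_ker (R : realType) n (B : 'M[R]_n) alpha T (x : 'cV[R]_n) :
  B *m x = 0 -> Nmat B alpha T *m x = 0.
Proof. by move=> Bx0; rewrite /Nmat -scalemxAl mulmxBl Mmat_ker // subrr scaler0. Qed.

Lemma scale_Nmat (R : realType) n (B : 'M[R]_n) alpha T : alpha != 0 ->
  alpha *: Nmat B alpha T = invmx (Cmat B alpha T) - Mmat B alpha T.
Proof. by move=> alpha_neq0; rewrite /Nmat scalerA mulfV // scale1r. Qed.

Lemma flexpd_step_primal (R : realType) n eps (f : 'I_n -> R -> R)
    (A : 'M[R]_(eps, n)) (B : 'M[R]_n) alpha beta T p :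
  Cmat B alpha T \in unitmx ->
  invmx (Cmat B alpha T) *m (flexpd_step f A B alpha beta T p).1 =
  Mmat B alpha T *m p.1 - alpha *: (gradf f p.1 + A^T *m p.2).
Proof.
move=> C_unit; rewrite /= iter_inner_step mulmxBr mulmxA -scalemxAr mulmxA.
by rewrite mulVmx // mul1mx.
Qed.

Theorem lemma3p15 (R : realType) (n eps : nat) (ends : 'I_eps -> 'I_n * 'I_n)
  (f : 'I_n -> R -> R) (m L : R) (B : 'M[R]_n) (rho : R)
  (xs : 'cV[R]_n) (ls : 'cV[R]_eps) (alpha beta : R) (T : nat) (x0 : 'cV[R]_n) :
  simple_graph ends -> connected_graph ends ->
  0 < m -> m <= L ->
  (forall i x, derivable (f i) x 1 /\ derivable (derive1 (f i)) x 1) ->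
  (forall i x, m <= derive1 (derive1 (f i)) x <= L) ->
  B^T = B ->
  (forall v : 'cV[R]_n, 0 <= (v^T *m B *m v) 0 0) ->
  (forall v : 'cV[R]_n, incidence R ends *m v = 0 <-> B *m v = 0) ->
  (forall i j, i != j -> B i j != 0 -> graph_adj ends i j) ->
  eigenvalue B rho -> (forall a, eigenvalue B a -> a <= rho) ->
  (* x* is the unique minimizer of f subject to A x = 0 *)
  incidence R ends *m xs = 0 ->
  (forall x : 'cV[R]_n, incidence R ends *m x = 0 ->
     \sum_i f i (xs i 0) <= \sum_i f i (x i 0)) ->
  (forall x : 'cV[R]_n, incidence R ends *m x = 0 ->
     \sum_i f i (x i 0) <= \sum_i f i (xs i 0) -> x = xs) ->
  (* lambda* is a Lagrange multiplier in the column space of A *)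
  gradf f xs + (incidence R ends)^T *m ls = 0 ->
  B *m xs = 0 ->
  (exists w : 'cV[R]_n, ls = incidence R ends *m w) ->
  0 < beta -> (1 <= T)%N -> 0 < alpha -> alpha < rho^-1 ->
  forall k : nat,
  let A := incidence R ends in
  let xk := (flexpd f A B alpha beta T x0 k).1 in
  let xk1 := (flexpd f A B alpha beta T x0 k.+1).1 in
  let lk1 := (flexpd f A B alpha beta T x0 k.+1).2 in
  alpha *: (gradf f xk - gradf f xs) =
    Mmat B alpha T *m (xk - xk1)
    + alpha *: ((beta *: (A^T *m A) - Nmat B alpha T) *m (xk1 - xs))
    - alpha *: (A^T *m (lk1 - ls)).
Proof.
move=> _ _ _ _ _ _ B_sym _ _ _ _ rho_max Axs _ _ KKT Bxs _ _ T_gt0 alpha_gt0 alpha_lt.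
move=> k A xk xk1 lk1.
have C_unit := Cmat_unit B_sym rho_max T_gt0 alpha_gt0 alpha_lt.
set p := flexpd f A B alpha beta T x0 k.
have primal : invmx (Cmat B alpha T) *m xk1 =
    Mmat B alpha T *m xk - alpha *: (gradf f xk + A^T *m p.2).
  exact: flexpd_step_primal.
have A_xs : A *m xs = 0 := Axs.
have dual : lk1 = p.2 + beta *: (A *m xk1) by [].
have grad_xs : gradf f xs = - (A^T *m ls) by apply/eqP; rewrite -addr_eq0 KKT.
have kill_xs : (beta *: (A^T *m A) - Nmat B alpha T) *m (xk1 - xs) =
    (beta *: (A^T *m A) - Nmat B alpha T) *m xk1.
  rewrite mulmxBr [X in _ - X]mulmxBl -scalemxAl -mulmxA A_xs Nmat_ker //.
  by rewrite mulmx0 scaler0 !subr0.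
rewrite kill_xs mulmxBl [X in _ + X - _]scalerBr [alpha *: (Nmat _ _ _ *m _)]scalemxAl.
rewrite scale_Nmat ?gt_eqF // mulmxBl primal dual grad_xs.
rewrite !(mulmxBr, mulmxDr) -!scalemxAl -[A^T *m A *m _]mulmxA -!scalemxAr.
move: (gradf f xk) (A^T *m ls) (A^T *m p.2) (A^T *m (A *m xk1)).
move: (Mmat B alpha T *m xk) (Mmat B alpha T *m xk1) => Mx Mx1 G Ls Lk AAx.
by apply/matrixP => i j; rewrite !mxE; ring.
Qed.
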